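(* Let $W:\mathcal{X}\to\mathcal{Z}$ be a discrete memoryless channel and let $P_X\in\mathcal{P}_n(\mathcal{X})$. Let $\mathcal{C}_X$ be a codebook of size $M_X$ all of whose codewords lie in the type class $T_{P_X}$, with decoding sets (pairwise disjoint subsets of $\mathcal{Z}^n$), and suppose the distinct sequences in $\mathcal{C}_X$ are $\mathbf{x}_1,\dots,\mathbf{x}_M$, with $\mathbf{x}_i$ occurring $N_i$ times, $M_X=N_1+\cdots+N_M$, and $N_M\ge 2$. If $M_X\le|T_{P_X}|-1$, then there exist a sequence $\mathbf{x}\in T_{P_X}\setminus\{\mathbf{x}_1,\dots,\mathbf{x}_M\}$ and a codebook $\mathcal{C}'_X$ with decoding sets such that $|\mathcal{C}'_X|=|\mathcal{C}_X|$, $\mathcal{C}'_X$ contains $\mathbf{x}_i$ exactly $N'_i=N_i$ times for $i=1,\dots,M-1$, contains $\mathbf{x}_M$ exactly $N'_M=N_M-1$ times, contains $\mathbf{x}$ exactly once ($N'_{M+1}=1$), and $e(\mathcal{C}'_X,W)\le e(\mathcal{C}_X,W)$.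
   Context: $T_{P_X}$ denotes the set of sequences in $\mathcal{X}^n$ of type $P_X$, i.e. with empirical distribution $P_X$. For a single-user codebook $\mathcal{C}_X=(\mathbf{x}'_1,\dots,\mathbf{x}'_{M_X})$ (a list, possibly with repetitions) with pairwise disjoint decoding sets $D_1,\dots,D_{M_X}\subset\mathcal{Z}^n$, the average error probability is $e(\mathcal{C}_X,W)=\frac1{M_X}\sum_{m=1}^{M_X}W^n(D_m^c|\mathbf{x}'_m)$, where $W^n(\mathbf z|\mathbf x)=\prod_{t}W(z_t|x_t)$. *)

From HB Require Import structures.
From mathcomp Require Import all_boot all_order all_algebra.
Set Implicit Arguments. Unset Strict Implicit. Unset Printing Implicit Defensive.
Import Order.TTheory GRing.Theory Num.Theory.
Local Open Scope ring_scope.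

(* A DMC W : X -> Z, W x z = W(z|x). *)
Definition is_channel (R : realFieldType) (X Z : finType) (W : X -> Z -> R) :=
  (forall x z, 0 <= W x z) /\ (forall x, \sum_(z : Z) W x z = 1).

Definition Wn (R : realFieldType) (X Z : finType) (W : X -> Z -> R) (n : nat)
  (x : n.-tuple X) (z : n.-tuple Z) : R :=
  \prod_(i < n) W (tnth x i) (tnth z i).

Definition is_ntype (R : realFieldType) (X : finType) (n : nat) (P : X -> R) :=
  exists k : X -> nat, (\sum_(a : X) k a)%N = n /\ forall a, P a = (k a)%:R / n%:R.

Definition type_class (R : realFieldType) (X : finType) (n : nat) (P : X -> R)
  : {set n.-tuple X} :=
  [set x : n.-tuple X | [forall a : X, (count_mem a x)%:R / n%:R == P a]].

Definition disjoint_dec (Z : finType) (n M : nat) (D : 'I_M -> {set n.-tuple Z}) :=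
  forall m m' : 'I_M, m != m' -> [disjoint D m & D m'].

Definition avg_err (R : realFieldType) (X Z : finType) (W : X -> Z -> R) (n M : nat)
  (C : 'I_M -> n.-tuple X) (D : 'I_M -> {set n.-tuple Z}) : R :=
  M%:R^-1 * \sum_(m < M) \sum_(z in ~: D m) Wn W (C m) z.

Definition mult (X : finType) (n M : nat) (C : 'I_M -> n.-tuple X) (y : n.-tuple X) : nat :=
  #|[set m : 'I_M | C m == y]|.

From HB Require Import structures.
From mathcomp Require Import all_boot all_order all_algebra lra zify.
Set Implicit Arguments. Unset Strict Implicit. Unset Printing Implicit Defensive.
Import Order.TTheory GRing.Theory Num.Theory.
Local Open Scope ring_scope.

(* Two indices m1 != m2 carry the repeated codeword xM.  Replace the codeword
   at m2 by a sequence x of the type class that does not occur in the codebook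
   (one exists since MX < |T_P|), give it the empty decoding set, and enlarge
   the decoding set of m1 to D m1 :|: D m2.  Since D m1 and D m2 are disjoint,
   the error terms of m1 and m2 sum to (1 - W^n(D m1|xM)) + (1 - W^n(D m2|xM))
   both before and after the change, so the average error is unchanged. *)

Section Channel.

Variables (R : realFieldType) (X Z : finType) (W : X -> Z -> R) (n : nat).
Hypothesis W_channel : is_channel W.

Lemma sum_Wn (x : n.-tuple X) : \sum_(z : n.-tuple Z) Wn W x z = 1.
Proof.
have [_ W_sum1] := W_channel.
transitivity (\prod_(i < n) \sum_(c : Z) W (tnth x i) c); last first.
  by rewrite big1 // => i _; rewrite W_sum1.
rewrite bigA_distr_bigA /=.
rewrite (reindex (fun z : n.-tuple Z => [ffun i => tnth z i])) /=.
  by apply: eq_bigr => z _; apply: eq_bigr => i _; rewrite ffunE.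
exists (fun f : {ffun 'I_n -> Z} => [tuple f i | i < n]) => [z _|f _].
  by apply: eq_from_tnth => i; rewrite tnth_mktuple ffunE.
by apply/ffunP => i; rewrite ffunE tnth_mktuple.
Qed.

Definition dec_err (x : n.-tuple X) (A : {set n.-tuple Z}) : R :=
  \sum_(z in ~: A) Wn W x z.

Lemma dec_errE x A : dec_err x A = 1 - \sum_(z in A) Wn W x z.
Proof.
rewrite -(sum_Wn x) (bigID (mem A) predT) /= addrC addrK.
by apply: eq_bigl => z; rewrite in_setC.
Qed.

Lemma dec_err0 x : dec_err x set0 = 1.
Proof. by rewrite dec_errE big_set0 subr0. Qed.

Lemma dec_errU x (A B : {set n.-tuple Z}) : [disjoint A & B] ->
  dec_err x (A :|: B) = dec_err x A + dec_err x B - 1.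
Proof.
move=> disAB; rewrite !dec_errE.
rewrite (eq_bigl [predU A & B]) => [|z]; last by rewrite !inE.
by rewrite bigU //=; lra.
Qed.

End Channel.

Lemma disjoint_setUl (T : finType) (A B E : {set T}) :
  [disjoint A :|: B & E] = [disjoint A & E] && [disjoint B & E].
Proof. by rewrite -!setI_eq0 setIUl setU_eq0. Qed.

Lemma exists_notin_codom (I T : finType) (f : I -> T) (A : {set T}) :
  (#|I| < #|A|)%N -> exists2 x, x \in A & forall i, f i != x.
Proof.
move=> ltIA; case: (pickP [pred x in A | x \notin f @: setT]) => [x /andP[xA xf]|none].
  by exists x => // i; apply: contraNneq xf => <-; apply: imset_f.
have subA : A \subset f @: setT.
  by apply/subsetP => x xA; move: (none x); rewrite /= xA => /negbFE.
have := leq_trans (subset_leq_card subA) (leq_imset_card _ _).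
by rewrite cardsT leqNgt ltIA.
Qed.

Lemma eq_sum_off2 (R : zmodType) (N : nat) (m1 m2 : 'I_N) (F G : 'I_N -> R) :
  m1 != m2 -> F m1 + F m2 = G m1 + G m2 ->
  (forall m, m != m1 -> m != m2 -> F m = G m) ->
  \sum_(m < N) F m = \sum_(m < N) G m.
Proof.
move=> ne12 eq12 eqF.
have split12 (H : 'I_N -> R) : \sum_(m < N) H m
    = H m1 + H m2 + \sum_(m < N | (m != m1) && (m != m2)) H m.
  by rewrite (bigD1 m1) // (bigD1 m2) 1?eq_sym //=; apply: addrA.
rewrite !split12 eq12; congr (_ + _).
by apply: eq_bigr => m /andP[ne1 ne2]; apply: eqF.
Qed.

Section CodebookSurgery.

Variables (X Z : finType) (n M : nat).
Implicit Types (C : 'I_M -> n.-tuple X) (D : 'I_M -> {set n.-tuple Z}).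

Definition set_codeword C (m : 'I_M) (x : n.-tuple X) : 'I_M -> n.-tuple X :=
  fun m' => if m' == m then x else C m'.

Lemma mult_set_codeword C m x y :
  (mult (set_codeword C m x) y + (C m == y) = mult C y + (x == y))%N.
Proof.
have off_m : [set m' | set_codeword C m x m' == y] :\ m = [set m' | C m' == y] :\ m.
  by apply/setP => m'; rewrite !inE /set_codeword; case: eqP.
rewrite /mult (cardsD1 m [set _ | set_codeword C m x _ == y]) off_m.
rewrite (cardsD1 m [set _ | C _ == y]) !inE /set_codeword eqxx.
by rewrite addnAC -addnA [RHS]addnAC -addnA addnCA.
Qed.

Definition merge_dec D (m1 m2 : 'I_M) : 'I_M -> {set n.-tuple Z} :=
  fun m => if m == m2 then set0 else if m == m1 then D m1 :|: D m2 else D m.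

Lemma disjoint_dec_merge D m1 m2 :
  m1 != m2 -> disjoint_dec D -> disjoint_dec (merge_dec D m1 m2).
Proof.
move=> ne12 disD m m' nmm'; rewrite /merge_dec.
have [_|nm2] := eqVneq m m2; first by rewrite -setI_eq0 set0I.
have [_|nm'2] := eqVneq m' m2; first by rewrite -setI_eq0 setI0.
have [e1|nm1] := eqVneq m m1; have [e1'|nm'1] := eqVneq m' m1.
- by move: nmm'; rewrite e1 e1' eqxx.
- by rewrite -e1 disjoint_setUl !disD // eq_sym.
- by rewrite -e1' disjoint_sym disjoint_setUl !(disjoint_sym _ (D m)) !disD // eq_sym.
- exact: disD.
Qed.

End CodebookSurgery.

Lemma avg_err_merge (R : realFieldType) (X Z : finType) (W : X -> Z -> R)
    (n M : nat) (C : 'I_M -> n.-tuple X) (D : 'I_M -> {set n.-tuple Z})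
    (m1 m2 : 'I_M) (x : n.-tuple X) :
  is_channel W -> m1 != m2 -> C m1 = C m2 -> [disjoint D m1 & D m2] ->
  avg_err W (set_codeword C m2 x) (merge_dec D m1 m2) = avg_err W C D.
Proof.
move=> W_channel ne12 C12 disD12; rewrite /avg_err; congr (_ * _).
apply: (@eq_sum_off2 _ _ m1 m2
  (fun m => dec_err W (set_codeword C m2 x m) (merge_dec D m1 m2 m))
  (fun m => dec_err W (C m) (D m))) => //.
- rewrite /set_codeword /merge_dec (negbTE ne12) !eqxx.
  by rewrite dec_errU // dec_err0 // C12 subrK.
- by move=> m ne1 ne2; rewrite /set_codeword /merge_dec (negbTE ne1) (negbTE ne2).
Qed.

Theorem lemma3 (R : realFieldType) (X Z : finType) (W : X -> Z -> R) (n : nat)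
  (P : X -> R) (MX : nat) (C : 'I_MX -> n.-tuple X) (D : 'I_MX -> {set n.-tuple Z})
  (xM : n.-tuple X) :
  is_channel W ->
  is_ntype n P ->
  (forall m, C m \in type_class n P) ->
  disjoint_dec D ->
  (2 <= mult C xM)%N ->
  (MX <= #|type_class n P| - 1)%N ->
  exists (x : n.-tuple X) (C' : 'I_MX -> n.-tuple X) (D' : 'I_MX -> {set n.-tuple Z}),
    [/\ x \in type_class n P, mult C x = 0%N & disjoint_dec D'] /\
    [/\
          (forall y, y != xM -> y != x -> mult C' y = mult C y),
        mult C' xM = (mult C xM).-1,
        mult C' x = 1%N
      & avg_err W C' D' <= avg_err W C D].
Proof.
move=> W_channel _ _ disD mult_xM le_MX_T.
have /card_gt1P[m1 [m2 []]] := mult_xM; rewrite !inE => /eqP C1 /eqP C2 ne12.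
have lt_MX_T : (#|'I_MX| < #|type_class n P|)%N.
  have := max_card (mem [set m | C m == xM]); rewrite card_ord -/(mult C xM).
  lia.
have [x xT fresh] := exists_notin_codom C lt_MX_T.
have mult_x : mult C x = 0%N.
  by apply/eqP; rewrite cards_eq0; apply/eqP/setP => m; rewrite !inE (negbTE (fresh m)).
have xM_x : (xM == x) = false by rewrite -C2 (negbTE (fresh m2)).
have mult_C' := mult_set_codeword C m2 x; rewrite C2 in mult_C'.
exists x, (set_codeword C m2 x), (merge_dec D m1 m2).
split; first by split=> //; apply: disjoint_dec_merge.
split.
- by move=> y ny nx; have := mult_C' y; rewrite eq_sym (negbTE ny) eq_sym (negbTE nx) !addn0.
- by have := mult_C' xM; rewrite eqxx eq_sym xM_x addn1 addn0 => <-.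
- by have := mult_C' x; rewrite eqxx xM_x mult_x addn0.
by rewrite avg_err_merge // ?C1 ?C2 ?disD.
Qed.
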